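(* Let $\mathcal{D}=\{1,\ldots,d^{\max}\}$, $m_d>0$ with $\sum_d m_d=1$, $d^{\mathtt{avg}}=\sum_d d\,m_d$, $\alpha,\gamma\in(0,1)$, $\beta_\mathtt{P}^d\in(0,1)$, and $c_\mathtt{P},L>0$. For $\mathbf{y}=(y^d)_{d\in\mathcal{D}}\in[0,1]^{d^{\max}}$ let $\Theta(\mathbf{y}):=\sum_{d\in\mathcal{D}}\frac{d m_d}{d^{\mathtt{avg}}}\beta_\mathtt{P}^d y^d$, and define thresholds $\Theta^d_{th}:=\frac{c_\mathtt{P}}{L(1-\alpha)d}$ for $d\in\mathcal{D}$, with $\Theta^{d^{\max}+1}_{th}:=0$. Assume there is a degree $d$ with $\Theta^d_{th}<1$ and let $d_{\min}$ be the smallest such degree. Define the intervals $\mathcal{I}_{d^{\max}+1}:=[0,\Theta^{d^{\max}}_{th})$, $\mathcal{I}_{d_{\min}}:=(\Theta^{d_{\min}}_{th},1]$, and $\mathcal{I}_d:=(\Theta^d_{th},\Theta^{d-1}_{th})$ for $d\in\{d_{\min}+1,\ldots,d^{\max}\}$. Call $\mathbf{y}\in[0,1]^{d^{\max}}$ an equilibrium of the switched dynamics if for every $d\in\mathcal{D}$ there exists $z^d_{\mathtt{S}}\in[0,1]$ with $z^d_{\mathtt{S}}=1$ if $\Theta(\mathbf{y})<\Theta^d_{th}$, $z^d_{\mathtt{S}}=0$ if $\Theta(\mathbf{y})>\Theta^d_{th}$ (and $z^d_{\mathtt{S}}$ arbitrary in $[0,1]$ if $\Theta(\mathbf{y})=\Theta^d_{th}$),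 such that $$0=-\gamma y^d+(1-y^d)\big(z^d_{\mathtt{S}}+\alpha(1-z^d_{\mathtt{S}})\big)\,d\,\Theta(\mathbf{y}).$$ An endemic equilibrium is a nonzero equilibrium; $\mathbf{y}=0$ is the disease-free equilibrium. Let $\mathcal{R}(d^\star)$ and $\Theta_{\mathtt{EE}}(d^\star)$ (for $d^\star\in\{1,\ldots,d^{\max}+1\}$) be as defined in the context, and let $\mathbf{y}_{\mathtt{EE}}(d^\star)$ denote the corresponding endemic equilibrium of the fixed-$d^\star$ dynamics when $\mathcal{R}(d^\star)>1$. Then: (1) If $\mathcal{R}(d^{\max}+1)\le 1$, the disease-free equilibrium is the only equilibrium of the switched dynamics. (2) Suppose $\mathcal{R}(d^{\max}+1)>1$, and let $d^{\mathtt{eq}}$ be the smallest element of $\{d_{\min},\ldots,d^{\max}+1\}$ with $\Theta_{\mathtt{EE}}(d^{\mathtt{eq}})>\Theta^{d^{\mathtt{eq}}}_{th}$. (a) If $\Theta_{\mathtt{EE}}(d^{\mathtt{eq}})\in\mathcal{I}_{d^{\mathtt{eq}}}$, then $\mathbf{y}_{\mathtt{EE}}(d^{\mathtt{eq}})$ is the unique endemic equilibrium of the switched dynamics. (b) If $\Theta_{\mathtt{EE}}(d^{\mathtt{eq}})\ge\Theta^{d^{\mathtt{eq}}-1}_{th}$, then the switched dynamics has a unique endemic equilibrium; it satisfies $\Theta(\mathbf{y})=\Theta^{d^{\mathtt{eq}}-1}_{th}$ and $y^d=\frac{s_d\,d\,\Theta^{d^{\mathtt{eq}}-1}_{th}}{\gamma+s_d\,d\,\Theta^{d^{\mathtt{eq}}-1}_{th}}$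 for all $d$, where $s_d=1$ for $d<d^{\mathtt{eq}}-1$, $s_d=\alpha$ for $d>d^{\mathtt{eq}}-1$, and $s_{d^{\mathtt{eq}}-1}=\bar z+\alpha(1-\bar z)$ for some $\bar z\in[0,1]$.
   Context: For $d^\star\in\{1,\ldots,d^{\max}+1\}$: $$\mathcal{R}(d^\star):=\sum_{d=1}^{d^\star-1}\frac{d^2 m_d\beta_\mathtt{P}^d}{d^{\mathtt{avg}}\gamma}+\sum_{d=d^\star}^{d^{\max}}\frac{\alpha\, d^2 m_d\beta_\mathtt{P}^d}{d^{\mathtt{avg}}\gamma}.$$ The fixed-$d^\star$ dynamics is $\dot y^d=-\gamma y^d+(1-y^d)\kappa_d\,d\,\Theta(\mathbf{y})$ with $\kappa_d=1$ for $d<d^\star$ and $\kappa_d=\alpha$ for $d\ge d^\star$; when $\mathcal{R}(d^\star)>1$ it has a unique nonzero equilibrium $\mathbf{y}_{\mathtt{EE}}(d^\star)\in[0,1]^{d^{\max}}$. $\Theta_{\mathtt{EE}}(d^\star):=\Theta(\mathbf{y}_{\mathtt{EE}}(d^\star))$ if $\mathcal{R}(d^\star)>1$, which is the unique $\Theta>0$ with $1=\sum_{d<d^\star}\frac{d m_d}{d^{\mathtt{avg}}}\frac{d\beta_\mathtt{P}^d}{\gamma+d\Theta}+\sum_{d\ge d^\star}\frac{d m_d}{d^{\mathtt{avg}}}\frac{\alpha d\beta_\mathtt{P}^d}{\gamma+\alpha d\Theta}$; and $\Theta_{\mathtt{EE}}(d^\star):=0$ if $\mathcal{R}(d^\star)\le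 1$. The switched dynamics models the SIS epidemic when susceptible agents of degree $d$ adopt protection (reducing infection probability by factor $\alpha$) exactly when $\Theta(\mathbf{y})$ exceeds $\Theta^d_{th}$, and infected agents always adopt protection (transmission rate $\beta_\mathtt{P}^d$). *)

From Stdlib Require Import ClassicalEpsilon.
From mathcomp Require Import all_boot all_order all_algebra.
From mathcomp Require Import reals.
Set Implicit Arguments. Unset Strict Implicit. Unset Printing Implicit Defensive.
Import Order.TTheory GRing.Theory Num.Theory.
Local Open Scope ring_scope.

(* Degrees are natural numbers d in D = {1,...,dmax}.  Degree-indexed data
   (m_d, beta_P^d, y^d) are functions nat -> R; only their values on D matter. *)
Section SIS.
Variables (R : realType) (dmax : nat) (m beta : nat -> R) (alpha gamma cP L : R).

Definition inD (d : nat) : Prop := (1 <= d <= dmax)%N.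

Definition davg : R := \sum_(1 <= d < dmax.+1) d%:R * m d.

Definition Theta (y : nat -> R) : R :=
  \sum_(1 <= d < dmax.+1) (d%:R * m d / davg) * beta d * y d.

Definition Theta_th (d : nat) : R :=
  if d == dmax.+1 then 0 else cP / (L * (1 - alpha) * d%:R).

Definition kappa (dstar d : nat) : R := if (d < dstar)%N then 1 else alpha.

Definition Rnum (dstar : nat) : R :=
  \sum_(1 <= d < dmax.+1) kappa dstar d * (d%:R ^+ 2 * m d * beta d) / (davg * gamma).

Definition in_box (y : nat -> R) : Prop := forall d, inD d -> 0 <= y d <= 1.

Definition nonzero_vec (y : nat -> R) : Prop := exists d, inD d /\ y d <> 0.

Definition eqD (y1 y2 : nat -> R) : Prop := forall d, inD d -> y1 d = y2 d.

Definition fixed_equilibrium (dstar : nat) (y : nat -> R) : Prop :=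
  in_box y /\
  forall d, inD d ->
    0 = - gamma * y d + (1 - y d) * kappa dstar d * d%:R * Theta y.

Definition y_EE (dstar : nat) : nat -> R :=
  epsilon (inhabits (fun _ : nat => (0 : R)))
    (fun y => fixed_equilibrium dstar y /\ nonzero_vec y).

Definition Theta_EE (dstar : nat) : R :=
  if 1 < Rnum dstar then
    epsilon (inhabits (0 : R))
      (fun t => 0 < t /\
        1 = \sum_(1 <= d < dmax.+1)
              (d%:R * m d / davg) * (kappa dstar d * d%:R * beta d)
                / (gamma + kappa dstar d * d%:R * t))
  else 0.

Definition switched_equilibrium (y : nat -> R) : Prop :=
  in_box y /\
  forall d, inD d ->
    exists z : R, 0 <= z <= 1 /\
      (Theta y < Theta_th d -> z = 1) /\
      (Theta_th d < Theta y -> z = 0) /\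
      0 = - gamma * y d + (1 - y d) * (z + alpha * (1 - z)) * d%:R * Theta y.

Definition endemic_equilibrium (y : nat -> R) : Prop :=
  switched_equilibrium y /\ nonzero_vec y.

Definition in_I (dmin d : nat) (t : R) : Prop :=
  if d == dmax.+1 then 0 <= t < Theta_th dmax
  else if d == dmin then Theta_th dmin < t <= 1
  else Theta_th d < t < Theta_th d.-1.

End SIS.

From Pilot Require Import Defs.
From mathcomp Require Import all_boot all_order all_algebra.
From mathcomp Require Import boolp classical_sets reals topology normedtype.
From mathcomp Require Import ring lra zify.
From Stdlib Require Import ClassicalEpsilon.
Import Order.TTheory GRing.Theory Num.Theory.
Import numFieldNormedType.Exports.
Local Open Scope ring_scope.
Set Implicit Arguments. Unset Strict Implicit. Unset Printing Implicit Defensive.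

(* For infection rates s_d, an equilibrium with Theta(y) = t > 0 is forced to be
   y_d = s_d d t / (gamma + s_d d t), and it is consistent exactly when
   gain s t = sum_d w_d s_d d beta_d / (gamma + s_d d t) equals 1; the gain
   decreases in t and increases in s.  At an endemic switched equilibrium the
   effective rates z_d + alpha (1 - z_d) are non-increasing in Theta (1 below
   Theta^d_th, alpha above it), so along such pairs (s, Theta) the gain is strictly
   decreasing: there is at most one endemic equilibrium, and none when the gain at
   Theta = 0 with all rates 1, which is R(dmax + 1), is at most 1.  For existence,
   if Theta_EE(deq) lies in I_deq the rates kappa of deq are admissible there;
   otherwise Theta sits at the threshold of degree deq - 1, where the gain moves
   from <= 1 to >= 1 as the mixing weight of that degree goes from 0 to 1, and the
   intermediate value theorem provides the equilibrium. *)


Lemma rate_diff (R : fieldType) (g b u1 u2 t1 t2 : R) :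
  g + u1 * t1 != 0 -> g + u2 * t2 != 0 ->
  u2 * b / (g + u2 * t2) - u1 * b / (g + u1 * t1)
  = b * ((u2 - u1) * g + u1 * u2 * (t1 - t2)) / ((g + u1 * t1) * (g + u2 * t2)).
Proof. by move=> h1 h2; field; rewrite h1 h2. Qed.

Section Rate.
Variables (R : realFieldType) (g b u1 u2 t1 t2 : R).
Hypotheses (g_gt0 : 0 < g) (u1_gt0 : 0 < u1) (u12 : u1 <= u2).
Hypotheses (t2_ge0 : 0 <= t2) (t21 : t2 <= t1).

Let u2_gt0 : 0 < u2. Proof. exact: lt_le_trans u12. Qed.
Let den1 : 0 < g + u1 * t1.
Proof. by rewrite ltr_pwDl // (mulr_ge0 (ltW u1_gt0) (le_trans t2_ge0 t21)). Qed.
Let den2 : 0 < g + u2 * t2.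
Proof. by rewrite ltr_pwDl // (mulr_ge0 (ltW u2_gt0) t2_ge0). Qed.
Let cross_ge0 : 0 <= (u2 - u1) * g /\ 0 <= u1 * u2 * (t1 - t2).
Proof. by split; rewrite !mulr_ge0 ?subr_ge0 // ltW. Qed.

Lemma ler_rate : 0 <= b -> u1 * b / (g + u1 * t1) <= u2 * b / (g + u2 * t2).
Proof.
move=> b_ge0; rewrite -subr_ge0 rate_diff ?gt_eqF //.
have [A B] := cross_ge0.
apply: divr_ge0; first by rewrite mulr_ge0 ?addr_ge0.
exact: ltW (mulr_gt0 den1 den2).
Qed.

Lemma ltr_rate : 0 < b -> u1 < u2 \/ t2 < t1 ->
  u1 * b / (g + u1 * t1) < u2 * b / (g + u2 * t2).
Proof.
move=> b_gt0 strict; rewrite -subr_gt0 rate_diff ?gt_eqF //.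
apply: divr_gt0; last exact: mulr_gt0.
apply: mulr_gt0 => //; have [A B] := cross_ge0.
case: strict => lt.
- by rewrite addrC ltr_pwDr // mulr_gt0 ?subr_gt0.
- by rewrite ltr_pwDr // !mulr_gt0 ?subr_gt0.
Qed.

End Rate.

Lemma ltr_sum_nat_le_lt (R : numDomainType) (a b i0 : nat) (F G : nat -> R) :
  (forall i, (a <= i < b)%N -> F i <= G i) -> (a <= i0 < b)%N -> F i0 < G i0 ->
  \sum_(a <= i < b) F i < \sum_(a <= i < b) G i.
Proof.
move=> FG i0ab Fi0.
have i0r : i0 \in index_iota a b by rewrite mem_index_iota.
have iota_uniq_ab : uniq (index_iota a b) by exact: iota_uniq.
rewrite [X in X < _](bigD1_seq i0) // [X in _ < X](bigD1_seq i0) //=.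
apply: ltr_leD => //.
rewrite big_seq_cond [X in _ <= X]big_seq_cond; apply: ler_sum => i /andP[].
by rewrite mem_index_iota => /FG.
Qed.

Section Equilibria.
Variables (R : realType) (dmax : nat) (m beta : nat -> R) (alpha gamma cP L : R).
Hypothesis dmax_gt0 : (0 < dmax)%N.
Hypothesis m_gt0 : forall d, inD dmax d -> 0 < m d.
Hypothesis beta01 : forall d, inD dmax d -> 0 < beta d < 1.
Hypotheses (alpha01 : 0 < alpha < 1) (gamma_gt0 : 0 < gamma).
Hypotheses (cP_gt0 : 0 < cP) (L_gt0 : 0 < L).

Local Notation inD := (inD dmax).
Local Notation davg := (davg dmax m).
Local Notation Theta := (Theta dmax m beta).
Local Notation Theta_th := (Theta_th dmax alpha cP L).
Local Notation kappa := (kappa alpha).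
Local Notation Rnum := (Rnum dmax m beta alpha gamma).
Local Notation Theta_EE := (Theta_EE dmax m beta alpha gamma).
Local Notation y_EE := (y_EE dmax m beta alpha gamma).
Local Notation in_box := (in_box dmax).
Local Notation nonzero_vec := (nonzero_vec dmax).
Local Notation eqD := (eqD dmax).
Local Notation switched_equilibrium := (switched_equilibrium dmax m beta alpha gamma cP L).
Local Notation endemic := (endemic_equilibrium dmax m beta alpha gamma cP L).

Let alpha_gt0 : 0 < alpha. Proof. by case/andP: alpha01. Qed.
Let alpha_lt1 : alpha < 1. Proof. by case/andP: alpha01. Qed.

Lemma inD_iota d : (1 <= d < dmax.+1)%N -> inD d.
Proof. by rewrite /inD ltnS. Qed.

Lemma inD1 : inD 1.
Proof. by rewrite /inD leqnn. Qed.

Lemma natr_inD_gt0 d : inD d -> 0 < d%:R :> R.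
Proof. by case/andP=> d_gt0 _; rewrite ltr0n. Qed.

Lemma davg_gt0 : 0 < davg.
Proof.
rewrite /davg big_ltn // ltr_pwDl ?mul1r ?m_gt0 ?inD1 // big_nat sumr_ge0 // => d /andP[d1 d2].
have dD : inD d by apply: inD_iota; rewrite d2 (ltnW d1).
by rewrite mulr_ge0 ?ler0n // ltW ?m_gt0.
Qed.

Lemma weight_gt0 d : inD d -> 0 < d%:R * m d / davg.
Proof. by move=> dD; rewrite divr_gt0 ?davg_gt0 // mulr_gt0 ?natr_inD_gt0 ?m_gt0. Qed.

Lemma sum_weight : \sum_(1 <= d < dmax.+1) d%:R * m d / davg = 1.
Proof. by rewrite -mulr_suml divff // gt_eqF // davg_gt0. Qed.


Lemma Theta_th_inD d : inD d -> Theta_th d = cP / (L * (1 - alpha) * d%:R).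
Proof. by case/andP=> _ d_le; rewrite /Theta_th ltn_eqF // ltnS. Qed.

Lemma Theta_th_lt d1 d2 : inD d1 -> inD d2 -> (d1 < d2)%N -> Theta_th d2 < Theta_th d1.
Proof.
move=> d1D d2D lt12; rewrite !Theta_th_inD // ltr_pM2l // ltf_pV2 ?posrE;
  rewrite ?mulr_gt0 ?subr_gt0 ?natr_inD_gt0 //.
by rewrite ltr_pM2l ?mulr_gt0 ?subr_gt0 // ltr_nat.
Qed.

Lemma Theta_th_le d1 d2 : inD d1 -> inD d2 -> (d1 <= d2)%N -> Theta_th d2 <= Theta_th d1.
Proof.
move=> d1D d2D; rewrite leq_eqVlt => /orP[/eqP-> //|lt12].
exact/ltW/Theta_th_lt.
Qed.

Lemma Theta_th_inj d1 d2 : inD d1 -> inD d2 -> Theta_th d1 = Theta_th d2 -> d1 = d2.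
Proof.
move=> d1D d2D eq12; case: (ltngtP d1 d2) => // [lt12|lt21].
- by move: (Theta_th_lt d1D d2D lt12); rewrite eq12 ltxx.
- by move: (Theta_th_lt d2D d1D lt21); rewrite eq12 ltxx.
Qed.

Lemma Theta_th_gt0 d : inD d -> 0 < Theta_th d.
Proof.
by move=> dD; rewrite Theta_th_inD // divr_gt0 // !mulr_gt0 ?subr_gt0 ?natr_inD_gt0.
Qed.

Lemma Theta_th_ge0 d : 0 <= Theta_th d.
Proof.
rewrite /Theta_th; case: eqP => _ //.
by rewrite divr_ge0 ?mulr_ge0 ?ler0n ?subr_ge0 // ltW.
Qed.

Lemma kappa_bounds k d : 0 < kappa k d <= 1.
Proof. by rewrite /kappa; case: ifP; rewrite ?ltr01 ?lexx // alpha_gt0 ltW. Qed.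

Definition gain_term (s : nat -> R) (t : R) (d : nat) : R :=
  (d%:R * m d / davg) * (s d * d%:R * beta d) / (gamma + s d * d%:R * t).

Definition gain (s : nat -> R) (t : R) : R := \sum_(1 <= d < dmax.+1) gain_term s t d.

Definition y_of (s : nat -> R) (t : R) (d : nat) : R :=
  s d * d%:R * t / (gamma + s d * d%:R * t).

Section GainMonotone.
Variables (s1 s2 : nat -> R) (t1 t2 : R).
Hypotheses (s12 : forall d, inD d -> 0 < s1 d <= s2 d) (t2_ge0 : 0 <= t2) (t21 : t2 <= t1).

Lemma gain_term_le d : inD d -> gain_term s1 t1 d <= gain_term s2 t2 d.
Proof.
move=> dD; have /andP[s1_gt0 s1_le] := s12 dD; have /andP[beta_gt0 _] := beta01 dD.
rewrite /gain_term -[X in X <= _]mulrA -[X in _ <= X]mulrA ler_pM2l ?weight_gt0 //.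
by rewrite ler_rate ?mulr_gt0 ?natr_inD_gt0 ?ler_pM2r ?natr_inD_gt0 // ltW.
Qed.

Lemma gain_term_lt d : inD d -> s1 d < s2 d \/ t2 < t1 ->
  gain_term s1 t1 d < gain_term s2 t2 d.
Proof.
move=> dD strict; have /andP[s1_gt0 s1_le] := s12 dD; have /andP[beta_gt0 _] := beta01 dD.
rewrite /gain_term -[X in X < _]mulrA -[X in _ < X]mulrA ltr_pM2l ?weight_gt0 //.
by rewrite ltr_rate ?mulr_gt0 ?natr_inD_gt0 ?ler_pM2r ?ltr_pM2r ?natr_inD_gt0.
Qed.

Lemma gain_le : gain s1 t1 <= gain s2 t2.
Proof. by apply: ler_sum_nat => d /inD_iota; exact: gain_term_le. Qed.

Lemma gain_lt : t2 < t1 \/ (exists2 d, inD d & s1 d < s2 d) -> gain s1 t1 < gain s2 t2.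
Proof.
case=> [lt|[d0 d0D lt]].
- by apply: ltr_sum_nat => // d /inD_iota dD; apply: gain_term_lt => //; right.
- apply: (@ltr_sum_nat_le_lt _ _ _ d0); first by move=> d /inD_iota; exact: gain_term_le.
    by rewrite ltnS.
  by apply: gain_term_lt => //; left.
Qed.

End GainMonotone.

Lemma gain_inj s t1 t2 : (forall d, inD d -> 0 < s d) -> 0 <= t1 -> 0 <= t2 ->
  gain s t1 = gain s t2 -> t1 = t2.
Proof.
move=> s_gt0 t1_ge0 t2_ge0 gain12.
have s_le d : inD d -> 0 < s d <= s d by move=> dD; rewrite s_gt0 ?lexx.
case: (ltgtP t1 t2) => // lt.
- by move: (gain_lt s_le t1_ge0 (ltW lt) (or_introl lt)); rewrite gain12 ltxx.
- by move: (gain_lt s_le t2_ge0 (ltW lt) (or_introl lt)); rewrite gain12 ltxx.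
Qed.

Lemma gain_lt1 s t : (forall d, inD d -> 0 < s d <= 1) -> 1 <= t -> gain s t < 1.
Proof.
move=> s01 t_ge1; rewrite -sum_weight; apply: ltr_sum_nat => // d /inD_iota dD.
have /andP[s_gt0 _] := s01 d dD; have /andP[beta_gt0 beta_lt1] := beta01 dD.
have sd_gt0 : 0 < s d * d%:R by rewrite mulr_gt0 ?natr_inD_gt0.
rewrite /gain_term -mulrA -[X in _ < X]mulr1 ltr_pM2l ?weight_gt0 //.
have t_ge0 : 0 <= t := le_trans ler01 t_ge1.
rewrite ltr_pdivrMr ?mul1r; last by rewrite ltr_pwDl // mulr_ge0 // ltW.
by rewrite ltr_pwDl // ler_pM2l // ltW // (lt_le_trans beta_lt1).
Qed.

Lemma gain_kappa0 k : gain (kappa k) 0 = Rnum k.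
Proof.
apply: eq_big_nat => d _; rewrite /gain_term mulr0 addr0.
by field; rewrite !gt_eqF ?davg_gt0.
Qed.

Lemma gain_continuous (S : R -> nat -> R) (T : R -> R) x :
  (forall d, inD d -> {for x, continuous (S^~ d)}) -> {for x, continuous T} ->
  (forall d, inD d -> gamma + S x d * d%:R * T x != 0) ->
  {for x, continuous (fun u => gain (S u) (T u))}.
Proof.
move=> Sc Tc den.
have -> : (fun u => gain (S u) (T u))
    = fun u => \sum_(1 <= d < dmax.+1 | (1 <= d <= dmax)%N) gain_term (S u) (T u) d.
  by apply/funext => u; rewrite /gain big_nat_cond; apply: eq_bigl => d; rewrite andbT ltnS.
apply: (cvg_big (add_continuous (s := R^o))) => d dD.
have cst c : {for x, continuous (fun=> c : R)} by exact: cst_continuous.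
have Sdc : {for x, continuous (fun u => S u d * d%:R)}.
  exact: (continuousM (Sc d dD) (cst _)).
have numc : {for x, continuous (fun u => d%:R * m d / davg * (S u d * d%:R * beta d))}.
  exact (continuousM (cst _) (continuousM Sdc (cst _))).
have denc : {for x, continuous (fun u => gamma + S u d * d%:R * T u)}.
  exact (cvgD (cst gamma) (continuousM Sdc Tc)).
exact (continuousM numc (continuousV (x := x) (den d dD) denc)).
Qed.

Lemma gain_root s : (forall d, inD d -> 0 < s d <= 1) -> 1 < gain s 0 ->
  exists2 t, 0 < t & gain s t = 1.
Proof.
move=> s01 gain0_gt1.
have s_ge0 d : inD d -> 0 <= s d * d%:R.
  by move=> dD; have /andP[s_gt0 _] := s01 d dD; rewrite mulr_ge0 ?ler0n ?ltW.
have [t] : exists2 t, t \in `[0, 1] & gain s t = 1.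
  apply: IVT ler01 _ _; last first.
    by rewrite ge_min le_max (ltW (gain_lt1 s01 (lexx 1))) (ltW gain0_gt1) orbT.
  apply: continuous_in_subspaceT => t; rewrite inE /= in_itv /= => /andP[t_ge0 _].
  apply: (gain_continuous (S := fun=> s)) => // [d _|d dD]; first exact: cst_continuous.
  by rewrite gt_eqF // ltr_pwDl // mulr_ge0 ?s_ge0.
rewrite in_itv /= => /andP[t_ge0 _] gain_t; exists t => //.
by rewrite lt_def t_ge0 andbT; apply: contraTneq gain0_gt1 => <-; rewrite gain_t ltxx.
Qed.

Lemma rate_den_gt0 s t d : inD d -> 0 < s d -> 0 <= t -> 0 < gamma + s d * d%:R * t.
Proof. by move=> dD s_gt0 t_ge0; rewrite ltr_pwDl // !mulr_ge0 ?ler0n // ltW. Qed.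

Lemma Theta_y_of s t : (forall d, inD d -> 0 < s d) -> 0 <= t ->
  Theta (y_of s t) = t * gain s t.
Proof.
move=> s_gt0 t_ge0; rewrite /Theta /gain mulr_sumr; apply: eq_big_nat => d /inD_iota dD.
have den := rate_den_gt0 dD (s_gt0 d dD) t_ge0.
by rewrite /y_of /gain_term; field; rewrite !gt_eqF ?davg_gt0.
Qed.

Lemma Theta_eqD y1 y2 : eqD y1 y2 -> Theta y1 = Theta y2.
Proof. by move=> y12; apply: eq_big_nat => d /inD_iota dD; rewrite y12. Qed.

Lemma Theta_ge0 y : in_box y -> 0 <= Theta y.
Proof.
move=> y01; rewrite /Theta big_nat sumr_ge0 // => d /inD_iota dD.
have /andP[y_ge0 _] := y01 d dD; have /andP[beta_gt0 _] := beta01 dD.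
by rewrite mulr_ge0 ?(mulr_ge0 (ltW (weight_gt0 dD)) (ltW beta_gt0)).
Qed.

(* [fixed_equilibrium k] is [rate_equilibrium (kappa k)], and a switched
   equilibrium is a rate equilibrium for the rates z_d + alpha (1 - z_d). *)
Definition rate_equilibrium (s : nat -> R) (y : nat -> R) : Prop :=
  in_box y /\ forall d, inD d -> 0 = - gamma * y d + (1 - y d) * s d * d%:R * Theta y.

Lemma rate_equilibrium_y_of s y : (forall d, inD d -> 0 < s d) ->
  rate_equilibrium s y -> nonzero_vec y ->
  [/\ 0 < Theta y, gain s (Theta y) = 1 & eqD y (y_of s (Theta y))].
Proof.
move=> s_gt0 [y01 eq_y] [d0 [d0D y_d0]].
have Theta_gt0 : 0 < Theta y.
  rewrite lt_def Theta_ge0 // andbT; apply: contra_notN y_d0 => /eqP Theta0.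
  move: (eq_y d0 d0D); rewrite Theta0 mulr0 addr0 => /esym/eqP.
  by rewrite mulNr oppr_eq0 mulf_eq0 gt_eqF //= => /eqP.
have y_of_y : eqD y (y_of s (Theta y)).
  move=> d dD; have den := rate_den_gt0 dD (s_gt0 d dD) (ltW Theta_gt0).
  rewrite /y_of -[y d](mulfK (lt0r_neq0 den)); congr (_ / _).
  by have := eq_y d dD; lra.
split=> //; apply: (mulfI (lt0r_neq0 Theta_gt0)).
by rewrite mulr1 -Theta_y_of ?ltW // -(Theta_eqD y_of_y).
Qed.

Lemma y_of_rate_equilibrium s t : (forall d, inD d -> 0 < s d <= 1) -> 0 < t ->
  gain s t = 1 ->
  [/\ rate_equilibrium s (y_of s t), nonzero_vec (y_of s t) & Theta (y_of s t) = t].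
Proof.
move=> s01 t_gt0 gain_t.
have s_gt0 d : inD d -> 0 < s d by move=> /s01 /andP[].
have Theta_t : Theta (y_of s t) = t by rewrite Theta_y_of ?gain_t ?mulr1 // ltW.
have y_gt0 d : inD d -> 0 < y_of s t d.
  move=> dD; rewrite divr_gt0 ?rate_den_gt0 ?ltW ?s_gt0 //.
  by rewrite !mulr_gt0 ?natr_inD_gt0 ?s_gt0.
split=> //.
- split=> d dD.
    have den := rate_den_gt0 dD (s_gt0 d dD) (ltW t_gt0).
    by rewrite ltW ?y_gt0 //= ler_pdivrMr // mul1r ler_wpDl // ltW.
  have den := rate_den_gt0 dD (s_gt0 d dD) (ltW t_gt0).
  by rewrite Theta_t /y_of; field; rewrite gt_eqF.
- by exists 1%N; split; [exact: inD1 | exact/eqP/lt0r_neq0/y_gt0/inD1].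
Qed.

(* The effective rates s_d = z_d + alpha (1 - z_d) of a switched equilibrium
   with Theta(y) = t. *)
Definition admissible (s : nat -> R) (t : R) : Prop := forall d, inD d ->
  [/\ alpha <= s d <= 1, t < Theta_th d -> s d = 1 & Theta_th d < t -> s d = alpha].

Lemma admissible_bounds s t : admissible s t -> forall d, inD d -> 0 < s d <= 1.
Proof. by move=> adm d /adm[/andP[alpha_le ->] _ _]; rewrite (lt_le_trans alpha_gt0). Qed.

Lemma admissible_gt0 s t d : admissible s t -> inD d -> 0 < s d.
Proof. by move=> adm /(admissible_bounds adm)/andP[]. Qed.

Lemma endemic_admissible y : endemic y -> exists s,
  [/\ admissible s (Theta y), 0 < Theta y, gain s (Theta y) = 1 & eqD y (y_of s (Theta y))].
Proof.
move=> [[y01 eq_y] y_nz].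
have /choice[z zP] : forall d, exists z : R, inD d ->
    [/\ 0 <= z <= 1, Theta y < Theta_th d -> z = 1, Theta_th d < Theta y -> z = 0
      & 0 = - gamma * y d + (1 - y d) * (z + alpha * (1 - z)) * d%:R * Theta y].
  move=> d; case: (pselect (inD d)) => [/eq_y[z [z01 [z1 [z0 eq_z]]]]|notD].
  - by exists z.
  - by exists 0.
pose s d := z d + alpha * (1 - z d).
have s_adm : admissible s (Theta y).
  move=> d dD; have [/andP[z_ge0 z_le1] z1 z0 _] := zP d dD.
  split; rewrite /s.
  - have : 0 <= z d * (1 - alpha) by rewrite mulr_ge0 // subr_ge0 ltW.
    have : 0 <= (1 - z d) * (1 - alpha) by rewrite mulr_ge0 // subr_ge0 // ltW.
    by move=> *; apply/andP; split; nra.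
  - by move=> /z1->; rewrite subrr mulr0 addr0.
  - by move=> /z0->; rewrite subr0 mulr1 add0r.
have s_gt0 d : inD d -> 0 < s d by exact: admissible_gt0 s_adm.
have s_eq : rate_equilibrium s y by split=> // d /zP[].
by have [Theta_gt0 gain_Theta y_of_y] := rate_equilibrium_y_of s_gt0 s_eq y_nz; exists s.
Qed.

Lemma admissible_endemic s t : 0 < t -> admissible s t -> gain s t = 1 ->
  endemic (y_of s t) /\ Theta (y_of s t) = t.
Proof.
move=> t_gt0 adm gain_t.
have [[y01 eq_y] y_nz Theta_t] := y_of_rate_equilibrium (admissible_bounds adm) t_gt0 gain_t.
split=> //; split=> //; split=> // d dD.
have [/andP[alpha_le s_le1] s1 s_alpha] := adm d dD.
have alpha_neq1 : 1 - alpha != 0 by rewrite subr_eq0 gt_eqF.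
(* z_d is recovered from s_d = z_d + alpha (1 - z_d) *)
exists ((s d - alpha) / (1 - alpha)); rewrite Theta_t.
split; first by rewrite divr_ge0 ?subr_ge0 ?ler_pdivrMr ?subr_gt0 ?mul1r ?lerB // ltW.
split; first by move=> /s1->; rewrite divff.
split; first by move=> /s_alpha->; rewrite subrr mul0r.
have -> : (s d - alpha) / (1 - alpha) + alpha * (1 - (s d - alpha) / (1 - alpha)) = s d.
  by field.
by have := eq_y d dD; rewrite Theta_t.
Qed.

Lemma admissible_antitone s1 s2 t1 t2 : t1 < t2 -> admissible s1 t1 -> admissible s2 t2 ->
  forall d, inD d -> s2 d <= s1 d.
Proof.
move=> t12 adm1 adm2 d dD.
have [/andP[alpha_le1 _] s1_1 _] := adm1 d dD; have [/andP[_ s2_le] _ s2_alpha] := adm2 d dD.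
case: (ltgtP t2 (Theta_th d)) => [lt|gt|eq].
- by rewrite s1_1 // (lt_trans t12).
- by rewrite s2_alpha.
- by rewrite s1_1 // -eq.
Qed.

Lemma admissible_gain_lt s1 s2 t d0 : admissible s1 t -> admissible s2 t -> inD d0 ->
  s1 d0 < s2 d0 -> gain s1 t < gain s2 t.
Proof.
move=> adm1 adm2 d0D lt0.
have t_th d : inD d -> t != Theta_th d -> s1 d = s2 d.
  move=> dD; have [_ s1_1 s1_alpha] := adm1 d dD; have [_ s2_1 s2_alpha] := adm2 d dD.
  by case: (ltgtP t (Theta_th d)) => // [lt|gt] _; [rewrite s1_1 ?s2_1|rewrite s1_alpha ?s2_alpha].
have t_d0 : t = Theta_th d0 by apply/eqP; apply: contraTT lt0 => /(t_th _ d0D)->; rewrite ltxx.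
apply: gain_lt => //; last by right; exists d0.
- move=> d dD; rewrite (admissible_gt0 adm1 dD) /=.
  have [->|neq_d] := eqVneq d d0; first exact: ltW.
  rewrite t_th // t_d0; apply: contra neq_d.
  by move=> /eqP/(Theta_th_inj d0D dD)->.
- by rewrite t_d0 Theta_th_ge0.
Qed.

Lemma admissible_root_unique s1 s2 t1 t2 : 0 < t1 -> 0 < t2 ->
  admissible s1 t1 -> admissible s2 t2 -> gain s1 t1 = 1 -> gain s2 t2 = 1 ->
  t1 = t2 /\ forall d, inD d -> s1 d = s2 d.
Proof.
move=> t1_gt0 t2_gt0 adm1 adm2 gain1 gain2.
have gain_lt_of_lt sa sb ta tb : 0 < ta -> ta < tb -> admissible sa ta ->
    admissible sb tb -> gain sb tb < gain sa ta.
  move=> ta_gt0 ltab adma admb; apply: gain_lt; [|exact: ltW|exact: ltW|by left].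
  by move=> d dD; rewrite (admissible_gt0 admb dD) (admissible_antitone ltab).
have t12 : t1 = t2.
  case: (ltgtP t1 t2) => // [lt|gt].
  - by move: (gain_lt_of_lt _ _ _ _ t1_gt0 lt adm1 adm2); rewrite gain1 gain2 ltxx.
  - by move: (gain_lt_of_lt _ _ _ _ t2_gt0 gt adm2 adm1); rewrite gain1 gain2 ltxx.
subst t2; split=> // d dD; case: (ltgtP (s1 d) (s2 d)) => // [lt|gt].
- by move: (admissible_gain_lt adm1 adm2 dD lt); rewrite gain1 gain2 ltxx.
- by move: (admissible_gain_lt adm2 adm1 dD gt); rewrite gain1 gain2 ltxx.
Qed.

Lemma endemic_unique s t : 0 < t -> admissible s t -> gain s t = 1 ->
  forall y, endemic y -> eqD y (y_of s t).
Proof.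
move=> t_gt0 adm gain_t y /endemic_admissible[s' [adm' Theta_gt0 gain' y_of_y]].
have [<- s's] := admissible_root_unique Theta_gt0 t_gt0 adm' adm gain' gain_t.
by move=> d dD; rewrite y_of_y // /y_of s's.
Qed.

Lemma endemic_eqD y1 y2 : eqD y1 y2 -> endemic y1 -> endemic y2.
Proof.
move=> y12 [[y01 eq_y] [d0 [d0D y_d0]]]; split; last by exists d0; rewrite -y12.
split=> [d dD|d dD]; first by rewrite -y12 //; exact: y01.
by rewrite -y12 // -(Theta_eqD y12); exact: eq_y.
Qed.

Lemma Theta_EE_spec k : 1 < Rnum k -> 0 < Theta_EE k /\ gain (kappa k) (Theta_EE k) = 1.
Proof.
move=> R_gt1; rewrite /Defs.Theta_EE R_gt1.
have [t t_gt0 gain_t] : exists2 t, 0 < t & gain (kappa k) t = 1.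
  by apply: gain_root => [d _|]; rewrite ?kappa_bounds ?gain_kappa0.
have [] // := epsilon_spec (inhabits 0) (fun t => 0 < t /\ 1 = gain (kappa k) t).
by exists t.
Qed.

Lemma Rnum_gt1_of_Theta_EE k : Theta_th k < Theta_EE k -> 1 < Rnum k.
Proof.
rewrite /Defs.Theta_EE; case: ifP => // _.
by rewrite ltNge Theta_th_ge0.
Qed.

Lemma y_EE_eq k : 1 < Rnum k -> eqD (y_EE k) (y_of (kappa k) (Theta_EE k)).
Proof.
move=> R_gt1; have [t_gt0 gain_t] := Theta_EE_spec R_gt1.
have kappa_gt0 d : inD d -> 0 < kappa k d by move=> _; case/andP: (kappa_bounds k d).
have [[y01 eq_y] y_nz] : rate_equilibrium (kappa k) (y_EE k) /\ nonzero_vec (y_EE k).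
  have [eq_y y_nz _] := y_of_rate_equilibrium (fun d _ => kappa_bounds k d) t_gt0 gain_t.
  exact (epsilon_spec _ (fun y => rate_equilibrium (kappa k) y /\ nonzero_vec y)
    (ex_intro _ _ (conj eq_y y_nz))).
have [Theta_gt0 gain_Theta y_of_y] := rate_equilibrium_y_of kappa_gt0 (conj y01 eq_y) y_nz.
have Theta_y : Theta (y_EE k) = Theta_EE k.
  by apply: (gain_inj kappa_gt0); rewrite ?ltW // gain_Theta gain_t.
by rewrite -Theta_y.
Qed.

Lemma switched_equilibrium0 : switched_equilibrium (fun=> 0).
Proof.
have Theta0 : Theta (fun=> 0) = 0 by rewrite /Defs.Theta big1 // => d _; rewrite mulr0.
split=> [d _|d dD]; first by rewrite lexx ler01.
exists 1; rewrite Theta0; split; first by rewrite lexx ler01.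
split=> //; split=> [th_lt|]; last by rewrite !mulr0 addr0.
by move: (lt_trans (Theta_th_gt0 dD) th_lt); rewrite ltxx.
Qed.

Lemma no_endemic_of_Rnum_le1 : Rnum dmax.+1 <= 1 ->
  forall y, switched_equilibrium y -> forall d, inD d -> y d = 0.
Proof.
move=> R_le1 y eq_y d dD; apply/eqP/contraT => /eqP y_nz.
have [s [adm Theta_gt0 gain_s _]] := endemic_admissible (conj eq_y (ex_intro _ d (conj dD y_nz))).
have s_le d' : inD d' -> 0 < s d' <= kappa dmax.+1 d'.
  by move=> /[dup] /andP[_ d'_le] /(admissible_bounds adm); rewrite /kappa ltnS d'_le.
have := gain_lt s_le (lexx 0) (ltW Theta_gt0) (or_introl Theta_gt0).
by rewrite gain_s gain_kappa0 => /lt_le_trans/(_ R_le1); rewrite ltxx.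
Qed.

Lemma kappa_admissible k t :
  (forall d, inD d -> (k <= d)%N -> Theta_th d < t) ->
  (forall d, inD d -> (d < k)%N -> t <= Theta_th d) -> admissible (kappa k) t.
Proof.
move=> above below d dD; rewrite /kappa; case: ltnP => [dk|kd].
- split=> [||th_lt]; first by rewrite lexx ltW.
  + by [].
  + by move: (lt_le_trans th_lt (below d dD dk)); rewrite ltxx.
- split=> [|t_lt|]; first by rewrite lexx ltW.
  + by move: (lt_trans t_lt (above d dD kd)); rewrite ltxx.
  + by [].
Qed.

(* Rates of a switched equilibrium sitting exactly at the threshold of degree k. *)
Definition threshold_rates (k : nat) (z : R) (d : nat) : R :=
  if (d < k)%N then 1 else if (k < d)%N then alpha else z + alpha * (1 - z).

Lemma threshold_rates0 k : threshold_rates k 0 = kappa k.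
Proof.
apply/funext => d; rewrite /threshold_rates /kappa.
by case: ltngtP; rewrite ?subr0 ?mulr1 ?add0r.
Qed.

Lemma threshold_rates1 k : threshold_rates k 1 = kappa k.+1.
Proof.
apply/funext => d; rewrite /threshold_rates /kappa; case: ltngtP => [dk|kd|->].
- by rewrite ltnS ltnW.
- by rewrite ltnS leqNgt kd.
- by rewrite ltnSn subrr mulr0 addr0.
Qed.

Lemma threshold_rates_admissible k z : inD k -> 0 <= z <= 1 ->
  admissible (threshold_rates k z) (Theta_th k).
Proof.
move=> kD /andP[z_ge0 z_le1] d dD; rewrite /threshold_rates.
case: ltngtP => [dk|kd|->]; split=> //.
- by rewrite lexx ltW.
- by move=> th_lt; move: (lt_trans th_lt (Theta_th_lt dD kD dk)); rewrite ltxx.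
- by rewrite lexx ltW.
- by move=> th_lt; move: (lt_trans th_lt (Theta_th_lt kD dD kd)); rewrite ltxx.
- have : 0 <= z * (1 - alpha) by rewrite mulr_ge0 // subr_ge0 ltW.
  have : 0 <= (1 - z) * (1 - alpha) by rewrite mulr_ge0 // subr_ge0 // ltW.
  by move=> *; apply/andP; split; nra.
- by rewrite ltxx.
- by rewrite ltxx.
Qed.

Lemma threshold_root k : inD k ->
  gain (kappa k) (Theta_th k) <= 1 <= gain (kappa k.+1) (Theta_th k) ->
  exists2 z, 0 <= z <= 1 & gain (threshold_rates k z) (Theta_th k) = 1.
Proof.
move=> kD gain_bounds.
have [z] : exists2 z, z \in `[0, 1] & gain (threshold_rates k z) (Theta_th k) = 1.
  apply: IVT ler01 _ _; last first.
    rewrite threshold_rates0 threshold_rates1 ge_min le_max.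
    by case/andP: gain_bounds => -> ->; rewrite orbT.
  apply: continuous_in_subspaceT => z; rewrite inE /= in_itv /= => z01.
  have adm := threshold_rates_admissible kD z01.
  apply: (gain_continuous (S := threshold_rates k) (T := fun=> Theta_th k)).
  - move=> d dD; rewrite /threshold_rates; case: ltngtP => _ /=; try exact: cst_continuous.
    have cst c : {for z, continuous (fun=> c : R)} by exact: cst_continuous.
    exact (cvgD cvg_id (continuousM (cst alpha) (cvgB (cst 1) cvg_id))).
  - exact: cst_continuous.
  - move=> d dD; rewrite gt_eqF // rate_den_gt0 ?(admissible_gt0 adm) //.
    exact: Theta_th_ge0.
by rewrite in_itv /=; exists z.
Qed.

Section FirstThresholdBelowOne.
Variable dmin : nat.
Hypotheses (dmin_D : inD dmin)
  (dmin_min : forall d, inD d -> Theta_th d < 1 -> (dmin <= d)%N).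

Lemma Theta_th_ge1 d : inD d -> (d < dmin)%N -> 1 <= Theta_th d.
Proof.
by move=> dD lt_d; rewrite leNgt; apply: contraTN lt_d => /(dmin_min dD); rewrite -leqNgt.
Qed.

Lemma in_I_below k t : (dmin <= k <= dmax.+1)%N -> in_I dmax alpha cP L dmin k t ->
  forall d, inD d -> (d < k)%N -> t <= Theta_th d.
Proof.
move=> /andP[dmin_k k_le] I_t d dD dk.
have dmin_gt0 : (0 < dmin)%N by case/andP: dmin_D.
move: I_t; rewrite /in_I; case: eqP => [k_eq /andP[_ t_lt]|k_neq].
  apply/ltW/(lt_le_trans t_lt)/Theta_th_le => //; first by rewrite /inD leqnn andbT.
  by move: dk; rewrite k_eq ltnS.
case: eqP => [k_dmin /andP[_ t_le]|k_ne_dmin /andP[_ t_lt]].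
  by rewrite (le_trans t_le) // Theta_th_ge1 // -k_dmin.
apply/ltW/(lt_le_trans t_lt)/Theta_th_le => //; rewrite /inD; lia.
Qed.

Lemma endemic_at_Theta_EE k : (dmin <= k <= dmax.+1)%N -> Theta_th k < Theta_EE k ->
  in_I dmax alpha cP L dmin k (Theta_EE k) ->
  endemic (y_EE k) /\ forall y, endemic y -> eqD y (y_EE k).
Proof.
move=> k_range th_lt I_t.
have R_gt1 := Rnum_gt1_of_Theta_EE th_lt.
have [t_gt0 gain_t] := Theta_EE_spec R_gt1.
have adm : admissible (kappa k) (Theta_EE k).
  apply: kappa_admissible; last exact: in_I_below.
  move=> d dD kd; apply: le_lt_trans th_lt; apply: Theta_th_le => //.
  by move: dmin_D k_range dD; rewrite /inD; lia.
have y_EE_y_of := y_EE_eq R_gt1.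
have [end_y _] := admissible_endemic t_gt0 adm gain_t.
split; first by apply: endemic_eqD end_y => d dD; rewrite y_EE_y_of.
by move=> y end_y' d dD; rewrite (endemic_unique t_gt0 adm gain_t end_y') // y_EE_y_of.
Qed.

Lemma endemic_at_threshold k : (1 < k)%N -> (dmin <= k <= dmax.+1)%N ->
  Theta_th k < Theta_EE k ->
  (forall d, (dmin <= d < k)%N -> ~ (Theta_th d < Theta_EE d)) ->
  Theta_th k.-1 <= Theta_EE k ->
  exists y, endemic y /\ (forall y', endemic y' -> eqD y' y) /\
    Theta y = Theta_th k.-1 /\ exists z : R, 0 <= z <= 1 /\
      forall d, inD d -> y d = y_of (threshold_rates k.-1 z) (Theta_th k.-1) d.
Proof.
move=> k_gt1 /andP[dmin_k k_le] th_lt k_min th_le.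
have R_gt1 := Rnum_gt1_of_Theta_EE th_lt.
have [t_gt0 gain_t] := Theta_EE_spec R_gt1.
have kappa01 j d : inD d -> 0 < kappa j d <= kappa j d.
  by move=> _; rewrite lexx andbT; case/andP: (kappa_bounds j d).
have dmin_gt0 : (0 < dmin)%N by case/andP: dmin_D.
(* Theta_EE k < 1 by gain_lt1, while thresholds below dmin are at least 1. *)
have dmin_lt : (dmin < k)%N.
  rewrite ltn_neqAle dmin_k andbT; apply/eqP => dmin_eq.
  have k1D : inD k.-1 by rewrite /inD; lia.
  have th_ge1 : 1 <= Theta_th k.-1 by apply: Theta_th_ge1; rewrite // -dmin_eq; lia.
  have := gain_lt1 (fun d _ => kappa_bounds k d) (le_trans th_ge1 th_le).
  by rewrite gain_t ltxx.
have k1D : inD k.-1 by rewrite /inD; lia.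
have upper : 1 <= gain (kappa k.-1.+1) (Theta_th k.-1).
  rewrite prednK ?(ltnW k_gt1) // -gain_t.
  exact: gain_le (kappa01 k) (Theta_th_ge0 _) th_le.
have lower : gain (kappa k.-1) (Theta_th k.-1) <= 1.
  case: (boolP (1 < Rnum k.-1)) => [R1_gt1|]; last first.
    rewrite -leNgt -gain_kappa0; apply: le_trans.
    exact: gain_le (kappa01 _) (lexx 0) (Theta_th_ge0 _).
  have [t1_gt0 gain_t1] := Theta_EE_spec R1_gt1.
  have t1_le : Theta_EE k.-1 <= Theta_th k.-1.
    by rewrite leNgt; apply/negP/k_min; rewrite -ltnS prednK ?(ltnW k_gt1) //; lia.
  by rewrite -gain_t1; apply: gain_le (kappa01 _) (ltW t1_gt0) t1_le.
have [z z01 gain_z] := threshold_root k1D (introT andP (conj lower upper)).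
have adm := threshold_rates_admissible k1D z01.
have [end_y Theta_y] := admissible_endemic (Theta_th_gt0 k1D) adm gain_z.
exists (y_of (threshold_rates k.-1 z) (Theta_th k.-1)); do !split=> //.
- exact: endemic_unique (Theta_th_gt0 k1D) adm gain_z.
- by exists z.
Qed.

End FirstThresholdBelowOne.

End Equilibria.

Theorem theorem1 (R : realType) (dmax : nat) (m beta : nat -> R)
  (alpha gamma cP L : R)
  (hm_pos : forall d, inD dmax d -> 0 < m d)
  (hm_sum : \sum_(1 <= d < dmax.+1) m d = 1)
  (halpha : 0 < alpha < 1) (hgamma : 0 < gamma < 1)
  (hbeta : forall d, inD dmax d -> 0 < beta d < 1)
  (hcP : 0 < cP) (hL : 0 < L)
  (dmin : nat) (hdmin_D : inD dmax dmin)
  (hdmin_lt : Theta_th dmax alpha cP L dmin < 1)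
  (hdmin_min : forall d, inD dmax d -> Theta_th dmax alpha cP L d < 1 -> (dmin <= d)%N) :
  (* (1) *)
  (Rnum dmax m beta alpha gamma dmax.+1 <= 1 ->
     switched_equilibrium dmax m beta alpha gamma cP L (fun _ => 0) /\
     forall y, switched_equilibrium dmax m beta alpha gamma cP L y ->
       forall d, inD dmax d -> y d = 0)
  /\
  (* (2) *)
  (1 < Rnum dmax m beta alpha gamma dmax.+1 ->
   forall deq : nat,
     (dmin <= deq <= dmax.+1)%N ->
     Theta_th dmax alpha cP L deq < Theta_EE dmax m beta alpha gamma deq ->
     (forall d, (dmin <= d < deq)%N ->
        ~ (Theta_th dmax alpha cP L d < Theta_EE dmax m beta alpha gamma d)) ->
     (* (2a) *)
     (in_I dmax alpha cP L dmin deq (Theta_EE dmax m beta alpha gamma deq) ->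
        endemic_equilibrium dmax m beta alpha gamma cP L
          (y_EE dmax m beta alpha gamma deq) /\
        forall y, endemic_equilibrium dmax m beta alpha gamma cP L y ->
          eqD dmax y (y_EE dmax m beta alpha gamma deq))
     /\
     (* (2b) *)
     ((1 < deq)%N ->
      Theta_th dmax alpha cP L deq.-1 <= Theta_EE dmax m beta alpha gamma deq ->
      exists y,
        endemic_equilibrium dmax m beta alpha gamma cP L y /\
        (forall y', endemic_equilibrium dmax m beta alpha gamma cP L y' -> eqD dmax y' y) /\
        Theta dmax m beta y = Theta_th dmax alpha cP L deq.-1 /\
        exists zbar : R, 0 <= zbar <= 1 /\
          forall d, inD dmax d ->
            let s := if (d < deq.-1)%N then 1
                     else if (deq.-1 < d)%N then alpha
                     else zbar + alpha * (1 - zbar) in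
            y d = s * d%:R * Theta_th dmax alpha cP L deq.-1
                  / (gamma + s * d%:R * Theta_th dmax alpha cP L deq.-1))).
Proof.
have dmax_gt0 : (0 < dmax)%N by case/andP: hdmin_D; exact: leq_trans.
have gamma_gt0 : 0 < gamma by case/andP: hgamma.
split=> [R_le1|_ deq deq_range th_lt deq_min].
  split; first exact: switched_equilibrium0.
  exact: no_endemic_of_Rnum_le1.
split=> [I_t|deq_gt1 th_le].
  exact: (endemic_at_Theta_EE dmax_gt0 hm_pos hbeta halpha gamma_gt0 hcP hL hdmin_D hdmin_min).
exact: (endemic_at_threshold dmax_gt0 hm_pos hbeta halpha gamma_gt0 hcP hL hdmin_D hdmin_min).
Qed.
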